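(* Let $f:\mathbb{R}^d\to\mathbb{R}$ be twice differentiable and strictly pseudoconvex, with (unique) global minimizer $x_*$. Define \[ g(x)\coloneqq f(x_* )+\int_0^1\frac{\langle\nabla f(x_*+t(x-x_* )),\,x-x_*\rangle}{t}\,dt . \] Then $g$ is well defined and star-convex, i.e. for all $x\in\mathbb{R}^d$ and $\lambda\in[0,1]$, \[ g\bigl(x_*+\lambda(x-x_* )\bigr)\le(1-\lambda)\,g(x_* )+\lambda\,g(x). \]
   Context: $f$ is strictly pseudoconvex if for all $x\neq y$, $f(y)\le f(x)\Rightarrow\langle\nabla f(x),y-x\rangle<0$. *)

(* R^d is 'rV[R]_d. *)
From HB Require Import structures.
From mathcomp Require Import all_boot all_order all_algebra.
From mathcomp Require Import all_classical all_reals all_analysis.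
Set Implicit Arguments. Unset Strict Implicit. Unset Printing Implicit Defensive.
Import Order.TTheory GRing.Theory Num.Theory.
Import numFieldNormedType.Exports.
Local Open Scope classical_set_scope.
Local Open Scope ring_scope.

Definition dotp {R : realType} {d : nat} (u v : 'rV[R]_d) : R :=
  \sum_(i < d) u 0 i * v 0 i.

Definition grad {R : realType} {d : nat} (f : 'rV[R]_d -> R) (x : 'rV[R]_d)
  : 'rV[R]_d := \row_(i < d) ('D_(delta_mx 0 i) f x).

Definition twice_differentiable {R : realType} {d : nat}
  (f : 'rV[R]_d -> R) : Prop :=
  (forall x, differentiable f x) /\ (forall x, differentiable (grad f) x).

Definition strictly_pseudoconvex {R : realType} {d : nat}
  (f : 'rV[R]_d -> R) : Prop :=
  forall x y, x != y -> f y <= f x -> dotp (grad f x) (y - x) < 0.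

Definition is_global_minimizer {R : realType} {d : nat}
  (f : 'rV[R]_d -> R) (xs : 'rV[R]_d) : Prop :=
  forall x, f xs <= f x.

Definition g_integrand {R : realType} {d : nat} (f : 'rV[R]_d -> R)
  (xs x : 'rV[R]_d) (t : R) : R :=
  dotp (grad f (xs + t *: (x - xs))) (x - xs) / t.

Definition gfun {R : realType} {d : nat} (f : 'rV[R]_d -> R)
  (xs x : 'rV[R]_d) : R :=
  f xs + Rintegral lebesgue_measure `[0%R, 1%R] (g_integrand f xs x).

From HB Require Import structures.
From mathcomp Require Import all_boot all_order all_algebra.
From mathcomp Require Import all_classical all_reals all_analysis.
From mathcomp Require Import ring lra measurable_realfun.
Import Order.TTheory GRing.Theory Num.Theory.
Import numFieldNormedType.Exports.
Local Open Scope classical_set_scope.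
Local Open Scope ring_scope.

(* Put v := x - xs and psi(s) := <grad f (xs + s v), v>, so that the integrand
   of g(x) is psi(t) / t.  Since grad f (xs) = 0, psi(s) / s extends
   continuously to s = 0, hence is integrable.  As the integrand for
   xs + l v at t is l psi(l t) / t, the substitution s = l t gives
   g(xs + l v) - f(xs) = l * int_0^l psi(s)/s ds.  Strict pseudoconvexity at the
   minimizer gives psi(s) >= 0 for s > 0, so this is at most
   l * int_0^1 psi(s)/s ds = l (g(x) - g(xs)). *)

Section Dotp.
Context {R : realType} {d : nat}.
Implicit Types u v : 'rV[R]_d.

Lemma dotpZl u v (a : R) : dotp (a *: u) v = a * dotp u v.
Proof. by rewrite /dotp mulr_sumr; apply: eq_bigr => i _; rewrite mxE mulrA. Qed.

Lemma dotpZr u v (a : R) : dotp u (a *: v) = a * dotp u v.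
Proof. by rewrite /dotp mulr_sumr; apply: eq_bigr => i _; rewrite mxE mulrCA. Qed.

Lemma dotp0r u : dotp u 0 = 0.
Proof. by rewrite /dotp big1 // => i _; rewrite mxE mulr0. Qed.

Lemma continuous_dotpl v : continuous (dotp ^~ v).
Proof.
apply: continuous_big => [|i _]; first exact: add_continuous.
by move=> u; apply: continuousM; [exact: coord_continuous|exact: cst_continuous].
Qed.

End Dotp.

Lemma derive_at_min (R : realFieldType) (V : normedModType R) (f : V -> R) (a e : V) :
  derivable f a e -> (forall x, f a <= f x) -> 'D_e f a = 0.
Proof.
move=> df amin; pose q h : R := h^-1 * (f (h *: e + a) - f a).
have qD : q @ 0^' --> 'D_e f a := df.
apply/eqP; rewrite eq_le; apply/andP; split.
- apply: (cvgr_to_le (cvg_dnbhs_at_left qD)); near=> h.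
  have h0 : h < 0 by near: h; exact: nbhs_left_lt.
  by rewrite mulr_le0_ge0 ?invr_le0 ?(ltW h0) ?subr_ge0.
- apply: (cvgr_to_ge (cvg_dnbhs_at_right qD)); near=> h.
  have h0 : 0 < h by near: h; exact: nbhs_right_gt.
  by rewrite mulr_ge0 ?invr_ge0 ?(ltW h0) ?subr_ge0.
Unshelve. all: by end_near.
Qed.

Lemma ge0_subset_Rintegral (dT : measure_display) (T : measurableType dT) (R : realType)
    (mu : {measure set T -> \bar R}) (A B : set T) (f : T -> R) :
  measurable A -> measurable B -> mu.-integrable B (EFin \o f) ->
  (forall x, B x -> 0 <= f x) -> A `<=` B ->
  \int[mu]_(x in A) f x <= \int[mu]_(x in B) f x.
Proof.
move=> mA mB intB f0 AB; have intA := integrableS mB mA AB intB.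
rewrite /Rintegral fine_le ?(integrable_fin_num mA intA) ?(integrable_fin_num mB intB) //.
by apply: ge0_subset_integral => //; exact: measurable_int intB.
Qed.

Section RintegralItv.
Context {R : realType}.
Notation mu := (@lebesgue_measure R).
Implicit Types (f g h : R -> R) (a b l : R).

Lemma eq_Rintegral_itv_oc a b f g : measurable_fun `]a, b] f ->
  {in `]a, b]%classic, f =1 g} ->
  \int[mu]_(t in `[a, b]) f t = \int[mu]_(t in `[a, b]) g t.
Proof.
move=> mf fg; have mg := eq_measurable_fun f fg mf.
rewrite /Rintegral -!integral_itv_obnd_cbnd; last 2 first.
- exact/measurable_EFinP.
- exact/measurable_EFinP.
by congr fine; apply: eq_integral => t /fg /= ->.
Qed.

Lemma Rintegral_comp_scale h a b l : continuous h -> a <= b -> 0 < l ->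
  \int[mu]_(t in `[a, b]) (h (l * t) * l) = \int[mu]_(t in `[l * a, l * b]) h t.
Proof.
move=> hc ab l0.
have scale_deriv : derive1 ( *%R l) = cst l.
  by apply/funext => t; rewrite derive1E deriveZ //= derive_id /GRing.scale /= mulr1.
have := @integration_by_substitution_increasing R ( *%R l) h a b ab.
rewrite scale_deriv /Rintegral => -> //.
- by move=> x y _ _ xy; rewrite ltr_pM2l.
- by move=> x _; exact: cst_continuous.
- exact: is_cvg_cst.
- exact: is_cvg_cst.
- split; first by move=> x _; exact: derivableZ.
  + exact/cvg_at_right_filter/mulrl_continuous.
  + exact/cvg_at_left_filter/mulrl_continuous.
- exact: continuous_subspaceT.
Qed.

End RintegralItv.

Section RadialIntegrand.
Context {R : realType} {d : nat}.
Variables (f : 'rV[R]_d -> R) (xs : 'rV[R]_d).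
Hypothesis f_diff : forall x, differentiable f x.
Hypothesis grad_diff : forall x, differentiable (grad f) x.
Hypothesis f_pseudoconvex : strictly_pseudoconvex f.
Hypothesis xs_min : is_global_minimizer f xs.
Notation mu := (@lebesgue_measure R).
Implicit Types (v x : 'rV[R]_d) (s t l : R).

Definition radial_deriv v s := dotp (grad f (xs + s *: v)) v.

Definition radial_ratio v s :=
  if s == 0 then dotp ('D_v (grad f) xs) v else radial_deriv v s / s.

Lemma grad_at_min : grad f xs = 0.
Proof.
by apply/rowP => i; rewrite !mxE; apply: derive_at_min => //; exact: diff_derivable.
Qed.

Lemma radial_derivZ v l s : radial_deriv (l *: v) s = l * radial_deriv v (l * s).
Proof. by rewrite /radial_deriv scalerA dotpZr (mulrC s). Qed.

Lemma radial_deriv_ge0 v s : 0 < s -> 0 <= radial_deriv v s.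
Proof.
move=> s0; have [->|v0] := eqVneq v 0; first by rewrite /radial_deriv dotp0r.
have neq : xs + s *: v != xs.
  by rewrite -subr_eq0 addrC addKr scaler_eq0 negb_or (gt_eqF s0).
have := @f_pseudoconvex _ _ neq (xs_min _).
rewrite (_ : xs - _ = - s *: v); last by rewrite opprD addNKr scaleNr.
by rewrite dotpZr mulNr oppr_lt0 pmulr_rgt0 // => /ltW.
Qed.

Lemma continuous_radial_deriv v : continuous (radial_deriv v).
Proof.
move=> s; have line_cont : {for s, continuous (fun t : R => xs + t *: v)}.
  by apply: cvgD; [exact: cvg_cst|apply: cvgZr_tmp; exact: cvg_id].
have grad_cont := continuous_comp line_cont (differentiable_continuous (grad_diff _)).
exact: (continuous_comp grad_cont (continuous_dotpl v _)).
Qed.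

Lemma radial_quotient_cvg0 v :
  radial_deriv v s / s @[s --> 0^'] --> dotp ('D_v (grad f) xs) v.
Proof.
have dv : derivable (grad f) xs v by exact: diff_derivable.
have := cvg_comp _ _ dv (continuous_dotpl v _).
apply: cvg_trans; apply: near_eq_cvg; near=> s.
by rewrite /= dotpZl grad_at_min subr0 mulrC addrC.
Unshelve. all: by end_near.
Qed.

Lemma continuous_radial_ratio v : continuous (radial_ratio v).
Proof.
move=> s; have [->|s0] := eqVneq s 0.
  apply/continuous_withinNx; rewrite /radial_ratio eqxx.
  apply: cvg_trans (radial_quotient_cvg0 v); apply: near_eq_cvg; near=> t.
  suff t0 : t != 0 by rewrite (negPf t0).
  by near: t; exact: nbhs_dnbhs_neq.
have quot_cont : radial_deriv v t / t @[t --> s] --> radial_ratio v s.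
  rewrite /radial_ratio (negPf s0).
  by apply: continuousM; [exact: continuous_radial_deriv|exact: continuousV].
apply: cvg_trans quot_cont; apply: near_eq_cvg; near=> t.
suff t0 : t != 0 by rewrite /radial_ratio (negPf t0).
by near: t; exact: (cvgr_neq0 s cvg_id s0).
Unshelve. all: by end_near.
Qed.

Lemma radial_ratio_ge0 v s : 0 <= s -> 0 <= radial_ratio v s.
Proof.
rewrite le_eqVlt => /predU1P[<-|s0]; last first.
  by rewrite /radial_ratio (gt_eqF s0) divr_ge0 ?radial_deriv_ge0 ?ltW.
rewrite /radial_ratio eqxx.
apply: (cvgr_to_ge (cvg_dnbhs_at_right (radial_quotient_cvg0 v))); near=> t.
have t0 : 0 < t by near: t; exact: nbhs_right_gt.
by rewrite divr_ge0 ?radial_deriv_ge0 ?ltW.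
Unshelve. all: by end_near.
Qed.

Lemma radial_ratio_integrable v a b : mu.-integrable `[a, b] (EFin \o radial_ratio v).
Proof.
apply: continuous_compact_integrable; first exact: segment_compact.
exact/continuous_subspaceT/continuous_radial_ratio.
Qed.

Lemma g_integrandE x :
  g_integrand f xs x = fun t => if t == 0 then 0 else radial_ratio (x - xs) t.
Proof.
apply/funext => t; rewrite /g_integrand /radial_ratio.
by case: eqP => [->|//]; rewrite invr0 mulr0.
Qed.

Lemma measurable_g_integrand x : measurable_fun setT (g_integrand f xs x).
Proof.
rewrite g_integrandE; apply: measurable_fun_ifT.
- by apply: measurable_fun_eqr => //; exact: measurable_cst.
- exact: measurable_cst.
- exact: continuous_measurable_fun (continuous_radial_ratio _).
Qed.

Lemma g_integrand_integrable x a b :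
  mu.-integrable `[a, b] (EFin \o g_integrand f xs x).
Proof.
apply: le_integrable (radial_ratio_integrable (x - xs) a b) => //.
- by apply/measurable_EFinP; apply: measurable_funS (measurable_g_integrand x).
- by move=> t _; rewrite /= lee_fin g_integrandE; case: ifP; rewrite ?normr0.
Qed.

Lemma measurable_radial_ratio v (D : set R) : measurable D ->
  measurable_fun D (radial_ratio v).
Proof.
move=> mD; apply: measurable_funS (continuous_measurable_fun _) => //.
exact: continuous_radial_ratio.
Qed.

Lemma gfunE x : gfun f xs x = f xs + \int[mu]_(t in `[0, 1]) radial_ratio (x - xs) t.
Proof.
congr (_ + _); apply/esym/eq_Rintegral_itv_oc; first exact: measurable_radial_ratio.
by move=> t; rewrite inE /= in_itv /= /radial_ratio => /andP[/gt_eqF-> _].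
Qed.

Lemma Rintegral_radial_ratioZ v l : 0 < l ->
  \int[mu]_(t in `[0, 1]) radial_ratio (l *: v) t =
  l * \int[mu]_(t in `[0, l]) radial_ratio v t.
Proof.
move=> l0; have ratio_scale_cont : continuous (fun t => radial_ratio v (l * t) * l).
  move=> t; apply: (@continuousM _ _ (radial_ratio v \o *%R l) (cst l)).
    exact: continuous_comp (@mulrl_continuous _ l t) (continuous_radial_ratio v _).
  exact: cst_continuous.
transitivity (\int[mu]_(t in `[0, 1]) (l * (radial_ratio v (l * t) * l))).
  apply: eq_Rintegral_itv_oc; first exact: measurable_radial_ratio.
  move=> t; rewrite inE /= in_itv /= => /andP[t0 _].
  rewrite /radial_ratio mulf_eq0 !gt_eqF //= radial_derivZ.
  by field; rewrite !gt_eqF.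
rewrite RintegralZl //; last first.
  apply: continuous_compact_integrable; first exact: segment_compact.
  exact: continuous_subspaceT.
by rewrite Rintegral_comp_scale ?mulr0 ?mulr1 //; exact: continuous_radial_ratio.
Qed.

End RadialIntegrand.

Lemma gfun_center (R : realType) (d : nat) (f : 'rV[R]_d -> R) (xs : 'rV[R]_d) :
  gfun f xs xs = f xs.
Proof.
rewrite /gfun /g_integrand subrr.
under eq_Rintegral do rewrite dotp0r mul0r.
by rewrite Rintegral_cst // mul0r addr0.
Qed.

Theorem theorem4 (R : realType) (d : nat) (f : 'rV[R]_d -> R) (xs : 'rV[R]_d) :
  twice_differentiable f ->
  strictly_pseudoconvex f ->
  is_global_minimizer f xs ->
  (forall x : 'rV[R]_d,
     lebesgue_measure.-integrable `[0%R, 1%R] (EFin \o g_integrand f xs x)) /\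
  (forall (x : 'rV[R]_d) (lambda : R), 0 <= lambda <= 1 ->
     gfun f xs (xs + lambda *: (x - xs))
       <= (1 - lambda) * gfun f xs xs + lambda * gfun f xs x).
Proof.
move=> [f_diff grad_diff] f_pc xs_min; split=> [x|x l /andP[l0 l1]].
  exact: g_integrand_integrable.
have [->|l_neq0] := eqVneq l 0.
  by rewrite scale0r addr0 gfun_center subr0 mul1r mul0r addr0.
have l_gt0 : 0 < l by rewrite lt_neqAle eq_sym l_neq0.
rewrite gfun_center !gfunE // [xs + _]addrC addrK Rintegral_radial_ratioZ //.
have : \int[lebesgue_measure]_(t in `[0, l]) radial_ratio f xs (x - xs) t
    <= \int[lebesgue_measure]_(t in `[0, 1]) radial_ratio f xs (x - xs) t.
  apply: ge0_subset_Rintegral => //.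
  - exact: radial_ratio_integrable.
  - by move=> t; rewrite /= in_itv /= => /andP[t0 _]; exact: radial_ratio_ge0.
  - by apply: subset_itvl; rewrite bnd_simp.
move/(ler_wpM2l l0); lra.
Qed.
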